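(* Let $(x,y)\in\mathbb{R}^n\times\mathbb{R}$ be random variables with joint distribution $\mu$, and let $J(w)=\frac{1}{2}\mathbb{E}_{(x,y)\sim\mu}(y-x^Tw)^2$ for $w\in\mathbb{R}^n$, with $w^*$ an optimal solution of $\min_w J(w)$. Let $\epsilon>0$ be a stepsize with $\max_i(1-\epsilon\lambda_i(\mathbb{E}xx^T))^2<1$ ($\lambda_i(\cdot)$ the eigenvalues). Fix $\lambda>0$ and an initial vector $w_0\in\mathbb{R}^n$. At each iteration $k$, two agents $i=1,2$ produce stochastic gradients $g_k^1,g_k^2$; suppose that, given $w_k$, $g_k^1,g_k^2$ are independent random variables each with mean $\nabla J(w_k)$ and covariance $G$ (the same at each iteration). Each agent $i$ sets $$\alpha_k^i=\begin{cases}1 & \text{if } J(w_k-\epsilon g_k^i)-J(w_k)\le-\lambda,\\ 0 & \text{otherwise,}\end{cases}$$ and the weights are updated by $$w_{k+1}=\begin{cases} w_k-\epsilon g_k^1 & \text{if }\alpha_k^1=1,\alpha_k^2=0,\\ w_k-\epsilon g_k^2 & \text{if }\alpha_k^1=0,\alpha_k^2=1,\\ w_k-\frac{\epsilon}{2}(g_k^1+g_k^2) & \text{if }\alpha_k^1=\alpha_k^2=1,\\ w_k & \text{if }\alpha_k^1=\alpha_k^2=0.\end{cases}$$ Then the total communication satisfies, almost surely with respect to the data collected, $$\limsup_{N\to\infty}\sum_{k=0}^{N}\max\{\alpha_k^1,\alpha_k^2\}\le\frac{J(w_0)-J(w^* )}{\lambda}.$$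
   Context: This models communication-efficient distributed linear regression: a server holds weights $w_k$, broadcasts them to two agents, each agent computes a local stochastic gradient $g_k^i$ of $J$ at $w_k$ from freshly collected data, and transmits it ($\alpha_k^i=1$) only when the resulting decrease of $J$ is at least $\lambda$. An iteration counts as a communication if at least one agent transmits. *)

From HB Require Import structures.
From mathcomp Require Import all_boot all_order all_algebra.
From mathcomp Require Import all_classical all_reals all_analysis.
Set Implicit Arguments. Unset Strict Implicit. Unset Printing Implicit Defensive.
Import Order.TTheory GRing.Theory Num.Theory.
Import numFieldNormedType.Exports.
Local Open Scope classical_set_scope.
Local Open Scope ring_scope.

(* Data (x, y) in R^n x R are random variables X (n components) and Y on a
   probability space (T0, P0); their joint law is mu.
   J w = 1/2 E[(y - x^T w)^2]  (w a row vector, x^T w = \sum_j x_j w_j). *)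
Definition Jobj {d0} {T0 : measurableType d0} {R : realType} {n : nat}
  (P0 : probability T0 R) (X : 'I_n -> T0 -> R) (Y : T0 -> R)
  (w : 'rV[R]_n) : R :=
  fine ('E_P0[(fun t => (Y t - \sum_(j < n) X j t * w ord0 j) ^+ 2)%R])%E / 2.

Definition second_moment {d0} {T0 : measurableType d0} {R : realType} {n : nat}
  (P0 : probability T0 R) (X : 'I_n -> T0 -> R) : 'M[R]_n :=
  \matrix_(i, j) fine ('E_P0[(fun t => X i t * X j t)%R])%E.

Definition grad {R : realType} {n : nat} (J : 'rV[R]_n -> R) (w : 'rV[R]_n)
  : 'rV[R]_n :=
  \row_(j < n) derive J w (delta_mx ord0 j : 'rV[R]_n).

Definition trig {R : realType} {n : nat} (J : 'rV[R]_n -> R) (eps lam : R)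
  (w g : 'rV[R]_n) : bool :=
  J (w - eps *: g) - J w <= - lam.

Definition update {R : realType} {n : nat} (J : 'rV[R]_n -> R) (eps lam : R)
  (w g1 g2 : 'rV[R]_n) : 'rV[R]_n :=
  match trig J eps lam w g1, trig J eps lam w g2 with
  | true, false => w - eps *: g1
  | false, true => w - eps *: g2
  | true, true => w - (eps / 2) *: (g1 + g2)
  | false, false => w
  end.

Fixpoint wseq {T : Type} {R : realType} {n : nat} (J : 'rV[R]_n -> R)
  (eps lam : R) (w0 : 'rV[R]_n) (g1 g2 : nat -> T -> 'rV[R]_n) (k : nat)
  (t : T) : 'rV[R]_n :=
  match k with
  | 0 => w0
  | k'.+1 => update J eps lam (wseq J eps lam w0 g1 g2 k' t)
                              (g1 k' t) (g2 k' t)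
  end.

Definition comm {T : Type} {R : realType} {n : nat} (J : 'rV[R]_n -> R)
  (eps lam : R) (w0 : 'rV[R]_n) (g1 g2 : nat -> T -> 'rV[R]_n) (k : nat)
  (t : T) : nat :=
  let w := wseq J eps lam w0 g1 g2 k t in
  maxn (trig J eps lam w (g1 k t)) (trig J eps lam w (g2 k t)).

Definition sigma_rv {d} {T : measurableType d} {R : realType} {n : nat}
  (v : T -> 'rV[R]_n) : set (set T) :=
  <<s [set A | exists (j : 'I_n) (B : set R),
          measurable B /\ A = (fun t => v t ord0 j) @^-1` B] >>.

Definition is_condexp {d} {T : measurableType d} {R : realType}
  (P : probability T R) (F : set (set T)) (Z h : T -> R) : Prop :=
  (forall B : set R, measurable B -> F (h @^-1` B)) /\
  P.-integrable setT (fun t => (h t)%:E) /\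
  P.-integrable setT (fun t => (Z t)%:E) /\
  (forall A, F A -> (\int[P]_(t in A) (h t)%:E = \int[P]_(t in A) (Z t)%:E)%E).

Definition cond_mean {d} {T : measurableType d} {R : realType} {n : nat}
  (P : probability T R) (F : set (set T)) (v m : T -> 'rV[R]_n) : Prop :=
  forall j : 'I_n, is_condexp P F (fun t => v t ord0 j) (fun t => m t ord0 j).

Definition cond_cov {d} {T : measurableType d} {R : realType} {n : nat}
  (P : probability T R) (F : set (set T)) (v m : T -> 'rV[R]_n)
  (G : 'M[R]_n) : Prop :=
  forall i j : 'I_n,
    is_condexp P F (fun t => (v t ord0 i - m t ord0 i) * (v t ord0 j - m t ord0 j))
                   (fun _ => G i j).

Definition cond_indep {d} {T : measurableType d} {R : realType} {n : nat}
  (P : probability T R) (F : set (set T)) (u v : T -> 'rV[R]_n) : Prop :=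
  forall A B : set T, sigma_rv u A -> sigma_rv v B ->
  forall hA hB : T -> R,
    is_condexp P F (\1_A) hA -> is_condexp P F (\1_B) hB ->
    is_condexp P F (\1_(A `&` B)) (fun t => hA t * hB t).

From HB Require Import structures.
From mathcomp Require Import all_boot all_order all_algebra.
From mathcomp Require Import all_classical all_reals all_analysis.
From mathcomp Require Import lra measurable_realfun.
Import Order.TTheory GRing.Theory Num.Theory.
Set Implicit Arguments. Unset Strict Implicit.
Import numFieldNormedType.Exports.
Local Open Scope classical_set_scope.
Local Open Scope ring_scope.

(* The objective J is midpoint convex, so whenever an agent transmits the
   new iterate lowers J by at least lambda: for a single transmission this is
   the trigger condition, and for two transmissions the averaged step is the
   midpoint of two steps that each lower J by lambda.  Hence after N
   iterations lambda times the number of communications is at most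
   J(w_0) - J(w_N) <= J(w_0) - min J, on every sample path. *)

Definition square_integrable {d} {T : measurableType d} {R : realType}
  (P : probability T R) (f : T -> R) :=
  measurable_fun setT f /\ P.-integrable setT (fun t => (f t ^+ 2)%:E).

Section square_integrable.
Context d (T : measurableType d) (R : realType) (P : probability T R).
Implicit Types f g : T -> R.

Lemma square_integrableD f g : square_integrable P f -> square_integrable P g ->
  square_integrable P (fun t => f t + g t).
Proof.
move=> [mf intf] [mg intg]; split; first exact: measurable_funD.
apply: (@le_integrable _ _ _ _ _ _ _ (fun t => (2 * f t ^+ 2 + 2 * g t ^+ 2)%:E)).
- by [].
- apply/(measurable_EFinP _ (fun t => (f t + g t) ^+ 2)); apply: measurable_funX.
  exact: measurable_funD.
- move=> t _; rewrite !gee0_abs ?lee_fin ?sqr_ge0 //; last first.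
    by apply: addr_ge0; apply: mulr_ge0 => //; apply: sqr_ge0.
  have := sqr_ge0 (f t - g t); nra.
- under eq_fun do rewrite EFinD !EFinM.
  by apply: integrableD => //; apply: integrableZl.
Qed.

Lemma square_integrableZl c f : square_integrable P f ->
  square_integrable P (fun t => c * f t).
Proof.
move=> [mf intf]; split; first exact: measurable_funM.
under eq_fun do rewrite exprMn EFinM.
exact: integrableZl.
Qed.

Lemma square_integrable_sum n (F : 'I_n -> T -> R) :
  (forall j, square_integrable P (F j)) ->
  square_integrable P (fun t => \sum_(j < n) F j t).
Proof.
move=> sqF; elim: (index_enum _) => [|j s IH].
- under eq_fun do rewrite big_nil.
  split; first exact: measurable_cst.
  under eq_fun do rewrite expr0n /=.
  exact: integrable0.
- under eq_fun do rewrite big_cons.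
  exact: square_integrableD.
Qed.

Lemma expectation_sqr_midpoint_le f g :
  square_integrable P f -> square_integrable P g ->
  fine 'E_P[fun t => ((f t + g t) / 2) ^+ 2]
    <= (fine 'E_P[fun t => f t ^+ 2] + fine 'E_P[fun t => g t ^+ 2]) / 2.
Proof.
move=> sqf sqg.
have [_ intf] := sqf; have [_ intg] := sqg.
have [_ intm] := square_integrableZl 2^-1 (square_integrableD sqf sqg).
have midE t : (f t + g t) / 2 = 2^-1 * (f t + g t) by rewrite mulrC.
under eq_fun do rewrite midE.
rewrite unlock /=.
have le_mid : (\int[P]_t ((2^-1 * (f t + g t)) ^+ 2)%:E
    <= (2^-1)%:E * (\int[P]_t (f t ^+ 2)%:E + \int[P]_t (g t ^+ 2)%:E))%E.
  rewrite -(integralD measurableT intf intg).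
  rewrite -(integralZl measurableT (integrableD measurableT intf intg)).
  apply: le_integral => //; first exact/integrableZl/integrableD.
  move=> t _; rewrite -EFinD -EFinM lee_fin.
  have := sqr_ge0 (f t - g t); lra.
rewrite -(fineK (integrable_fin_num measurableT intf))
  -(fineK (integrable_fin_num measurableT intg))
  -(fineK (integrable_fin_num measurableT intm)) -EFinD -EFinM lee_fin in le_mid.
lra.
Qed.

End square_integrable.

Definition residual {d0} {T0 : measurableType d0} {R : realType} {n : nat}
  (X : 'I_n -> T0 -> R) (Y : T0 -> R) (w : 'rV[R]_n) (t : T0) : R :=
  Y t - \sum_(j < n) X j t * w ord0 j.

Section objective.
Context (R : realType) (n : nat) d0 (T0 : measurableType d0) (P0 : probability T0 R).
Variables (X : 'I_n -> T0 -> R) (Y : T0 -> R).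
Hypotheses (sqX : forall j, square_integrable P0 (X j))
  (sqY : square_integrable P0 Y).

Lemma square_integrable_residual w : square_integrable P0 (residual X Y w).
Proof.
suff -> : residual X Y w = fun t => Y t + -1 * \sum_(j < n) w ord0 j * X j t.
  exact: square_integrableD sqY (square_integrableZl (-1)
    (square_integrable_sum (fun j => square_integrableZl (w ord0 j) (sqX j)))).
apply/funext => t; rewrite /residual mulN1r.
by congr (_ - _); apply: eq_bigr => j _; rewrite mulrC.
Qed.

Lemma residual_midpoint a b t :
  residual X Y (2^-1 *: (a + b)) t = (residual X Y a t + residual X Y b t) / 2.
Proof.
rewrite /residual; have -> : \sum_(j < n) X j t * (2^-1 *: (a + b)) ord0 j =
    (\sum_(j < n) X j t * a ord0 j + \sum_(j < n) X j t * b ord0 j) / 2.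
  rewrite -big_split mulr_suml /=; apply: eq_bigr => j _; rewrite !mxE; lra.
lra.
Qed.

Lemma Jobj_midpoint_convex a b :
  Jobj P0 X Y (2^-1 *: (a + b)) <= (Jobj P0 X Y a + Jobj P0 X Y b) / 2.
Proof.
rewrite /Jobj; have -> :
    (fun t => (Y t - \sum_(j < n) X j t * (2^-1 *: (a + b)) ord0 j) ^+ 2) =
    (fun t => ((residual X Y a t + residual X Y b t) / 2) ^+ 2).
  by apply/funext => t; rewrite -residual_midpoint.
have := expectation_sqr_midpoint_le (square_integrable_residual a)
  (square_integrable_residual b).
rewrite /residual; lra.
Qed.

End objective.

Section event_triggered.
Context (R : realType) (n : nat) (J : 'rV[R]_n -> R) (eps lam : R).
Hypothesis J_midpoint_convex :
  forall a b, J (2^-1 *: (a + b)) <= (J a + J b) / 2.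

Lemma update_decrease w g1 g2 :
  J (update J eps lam w g1 g2)
    + lam * (maxn (trig J eps lam w g1) (trig J eps lam w g2))%:R <= J w.
Proof.
have trigE g : trig J eps lam w g -> J (w - eps *: g) <= J w - lam.
  by rewrite /trig; lra.
have averageE : w - (eps / 2) *: (g1 + g2) =
    2^-1 *: ((w - eps *: g1) + (w - eps *: g2)).
  by apply/rowP => j; rewrite !mxE; lra.
rewrite /update /maxn; case E1: (trig J eps lam w g1);
  case E2: (trig J eps lam w g2) => /=.
- have := J_midpoint_convex (w - eps *: g1) (w - eps *: g2).
  have := trigE _ E1; have := trigE _ E2; rewrite averageE; lra.
- by have := trigE _ E1; lra.
- by have := trigE _ E2; lra.
- lra.
Qed.

Lemma wseq_comm_telescope (T : Type) (w0 : 'rV[R]_n)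
    (g1 g2 : nat -> T -> 'rV[R]_n) t N :
  J (wseq J eps lam w0 g1 g2 N t)
    + lam * (\sum_(k < N) comm J eps lam w0 g1 g2 k t)%:R <= J w0.
Proof.
elim: N => [|N IH]; first by rewrite big_ord0 /=; lra.
have step : J (wseq J eps lam w0 g1 g2 N.+1 t)
    + lam * (comm J eps lam w0 g1 g2 N t)%:R <= J (wseq J eps lam w0 g1 g2 N t).
  exact: update_decrease.
by rewrite big_ord_recr natrD; lra.
Qed.

Lemma comm_sum_le (T : Type) (w0 wstar : 'rV[R]_n)
    (g1 g2 : nat -> T -> 'rV[R]_n) t N :
  0 < lam -> (forall w, J wstar <= J w) ->
  (\sum_(k < N) comm J eps lam w0 g1 g2 k t)%:R <= (J w0 - J wstar) / lam.
Proof.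
move=> lam_gt0 Jmin; rewrite ler_pdivlMr //.
have := wseq_comm_telescope w0 g1 g2 t N.
have := Jmin (wseq J eps lam w0 g1 g2 N t); lra.
Qed.

End event_triggered.

Lemma limn_esup_le (R : realType) (u : (\bar R)^nat) (l : \bar R) :
  (forall N, (u N <= l)%E) -> (limn_esup u <= l)%E.
Proof.
move=> ul; rewrite limn_esup_lim; apply: lime_le; first exact: is_cvg_esups.
by apply: nearW => N; apply: ge_ereal_sup => _ [k _ <-].
Qed.

Theorem theorem2 (R : realType) (n : nat)
  (* data (x, y) on a probability space; joint law mu *)
  (d0 : measure_display) (T0 : measurableType d0) (P0 : probability T0 R)
  (X : 'I_n -> {RV P0 >-> R}) (Y : {RV P0 >-> R})
  (hX2 : forall j, P0.-integrable setT (fun t => (X j t ^+ 2)%:E))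
  (hY2 : P0.-integrable setT (fun t => (Y t ^+ 2)%:E))
  (* optimal solution w* *)
  (wstar : 'rV[R]_n)
  (hopt : forall w, Jobj P0 (fun j => X j) Y wstar <= Jobj P0 (fun j => X j) Y w)
  (* stepsize *)
  (eps : R) (heps : 0 < eps)
  (hstep : forall a : R, eigenvalue (second_moment P0 (fun j => X j)) a ->
             (1 - eps * a) ^+ 2 < 1)
  (lam : R) (hlam : 0 < lam) (w0 : 'rV[R]_n)
  (* stochastic gradients of the two agents on a probability space *)
  (d : measure_display) (T : measurableType d) (P : probability T R)
  (g1 g2 : nat -> T -> 'rV[R]_n)
  (hg1m : forall k j, measurable_fun setT (fun t => g1 k t ord0 j))
  (hg2m : forall k j, measurable_fun setT (fun t => g2 k t ord0 j))
  (G : 'M[R]_n) :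
  let J := Jobj P0 (fun j => X j) Y in
  let w := wseq J eps lam w0 g1 g2 in
  (forall k, cond_mean P (sigma_rv (w k)) (g1 k) (fun t => grad J (w k t))) ->
  (forall k, cond_mean P (sigma_rv (w k)) (g2 k) (fun t => grad J (w k t))) ->
  (forall k, cond_cov P (sigma_rv (w k)) (g1 k) (fun t => grad J (w k t)) G) ->
  (forall k, cond_cov P (sigma_rv (w k)) (g2 k) (fun t => grad J (w k t)) G) ->
  (forall k, cond_indep P (sigma_rv (w k)) (g1 k) (g2 k)) ->
  {ae P, forall t,
    (limn_esup (fun N => ((\sum_(k < N.+1) comm J eps lam w0 g1 g2 k t)%:R : R)%:E)
      <= ((J w0 - J wstar) / lam)%:E)%E}.
Proof.
move=> J w _ _ _ _ _; apply: aeW => t.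
have sqX j : square_integrable P0 (X j) by split; [exact: measurable_funPT | exact: hX2].
have sqY : square_integrable P0 Y by split; [exact: measurable_funPT | exact: hY2].
have J_convex := Jobj_midpoint_convex sqX sqY.
apply: limn_esup_le => N; rewrite lee_fin.
exact: comm_sum_le.
Qed.
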